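(* Let $n\ge2$, $\ell\ge1$, and $\lambda,\mu\in P_n$ with $\lambda-\mu\equiv\sum_{i=1}^n\ell_i\epsilon_i$ modulo $\mathbb C\epsilon$ for nonnegative integers $\ell_1,\dots,\ell_n$ with $\sum_i\ell_i=\ell$. Let $u_{\lambda,\mu}\in F_\lambda(M(\mu))$ be the image of $v_\mu\otimes u_1^{\otimes\ell_1}\otimes\cdots\otimes u_n^{\otimes\ell_n}$, and let $\bar y_i$ be the operator on $F_\lambda(M(\mu))$ induced by $y_i$. Then for each $i=1,\dots,\ell$, $$\bar y_iu_{\lambda,\mu}=\zeta_i\,u_{\lambda,\mu},$$ where, for $\sum_{k<m}\ell_k<i\le\sum_{k\le m}\ell_k$, $\zeta_i=\mu'_m+i-\sum_{k<m}\ell_k-1$ with $\mu'_m=\langle\mu+\rho,\epsilon^\vee_m\rangle$.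
   Context: $\mathfrak{sl}_n=\mathfrak n_+\oplus\mathfrak h_n\oplus\mathfrak n_-$ standard; $\epsilon_i$ the $i$-th diagonal coordinate, $\epsilon=\sum_i\epsilon_i$; $\mathfrak h_n^*$ is identified with $\{\sum\lambda_i\epsilon_i:\sum\lambda_i=0\}\subset\mathfrak t_n^*=\bigoplus\mathbb C\epsilon_i$, with $\epsilon_i^\vee$ the dual basis of $\mathfrak t_n$; $\rho=\sum_i\frac{n-2i+1}{2}\epsilon_i$; $P_n$ is the integral weight lattice. $M(\mu)$ is the Verma module with highest weight vector $v_\mu$; $V_n=\mathbb C^n$ with standard basis $u_1,\dots,u_n$ ($u_i$ of weight the restriction of $\epsilon_i$ to $\mathfrak h_n$). $F_\lambda(X)=H_0(\mathfrak n_-,X\otimes V_n^{\otimes\ell})_\lambda=(X\otimes V_n^{\otimes\ell}/\mathfrak n_-(X\otimes V_n^{\otimes\ell}))_\lambda$. With $(x|y)=\mathrm{tr}(xy)$, $\Omega=\sum_a x_a\otimes x^a$ for dual bases, $\Omega_{ij}$ acting in tensor factors $i,j$ of $X\otimes V_n^{\otimes\ell}$ (factor $0$ is $X$), the operators $y_i=\Omega_{0i}+\sum_{1\le j<i}(\Omega_{ji}+\frac1n)+\frac{n-1}2$ commute with $\mathfrak{sl}_n$ and thus induce operators $\bar y_i$ on $F_\lambda(X)$. *)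

From HB Require Import structures.
From mathcomp Require Import all_boot all_order all_algebra.
From mathcomp Require Import complex Rstruct.
Set Implicit Arguments. Unset Strict Implicit. Unset Printing Implicit Defensive.
Import Order.TTheory GRing.Theory Num.Theory.
Local Open Scope ring_scope.

Definition C : fieldType := (Rdefinitions.R)[i].

Definition E (n : nat) (a b : 'I_n) : 'M[C]_n := delta_mx a b.

(* An sl_n-module structure on X: a map rho : gl_n -> End(X), linear in both
   arguments, whose restriction to sl_n = traceless matrices is a Lie algebra
   morphism.  (Only values on traceless matrices are ever used; any
   representation of sl_n extends linearly to such a rho.) *)
Definition sl_module (n : nat) (X : lmodType C) (rho : 'M[C]_n -> X -> X) : Prop :=
  [/\ (forall A (a : C) (x y : X), rho A (a *: x + y) = a *: rho A x + rho A y),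
      (forall A B (a : C) (x : X), rho (a *: A + B) x = a *: rho A x + rho B x) &
      (forall A B (x : X), \tr A = 0 -> \tr B = 0 ->
          rho (A *m B - B *m A) x = rho A (rho B x) - rho B (rho A x))].

(* Weights: elements of h_n^* identified with {sum_i lam_i eps_i : sum lam_i = 0}. *)
Definition hweight (n : nat) (lam : 'I_n -> C) : Prop := \sum_i lam i = 0.

Definition is_int (x : C) : Prop := exists z : int, x = z%:~R.

(* P_n: integral weights, <lam, alpha_i^vee> = lam_i - lam_{i+1} in Z. *)
Definition integral_weight (n : nat) (lam : 'I_n -> C) : Prop :=
  hweight lam /\ forall i j : 'I_n, j = i.+1 :> nat -> is_int (lam i - lam j).

Definition hw_vector (n : nat) (X : lmodType C) (rho : 'M[C]_n -> X -> X)
    (mu : 'I_n -> C) (v : X) : Prop :=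
  (forall a b : 'I_n, (a < b)%N -> rho (E a b) v = 0) /\
  (forall d : 'rV[C]_n, \sum_i d 0 i = 0 ->
      rho (diag_mx d) v = (\sum_i mu i * d 0 i) *: v).

(* (X, rho, v) is the Verma module M(mu) with highest weight vector v_mu,
   characterised by its universal property among sl_n-modules. *)
Definition is_verma (n : nat) (X : lmodType C) (rho : 'M[C]_n -> X -> X)
    (mu : 'I_n -> C) (v : X) : Prop :=
  sl_module rho /\ hw_vector rho mu v /\
  forall (Y : lmodType C) (rhoY : 'M[C]_n -> Y -> Y) (y : Y),
    sl_module rhoY -> hw_vector rhoY mu y ->
    exists phi : X -> Y,
      [/\ (forall (a : C) (x x' : X), phi (a *: x + x') = a *: phi x + phi x'),
          (forall A (x : X), \tr A = 0 -> phi (rho A x) = rhoY A (phi x)),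
          phi v = y &
          (forall psi : X -> Y,
             (forall (a : C) (x x' : X), psi (a *: x + x') = a *: psi x + psi x') ->
             (forall A (x : X), \tr A = 0 -> psi (rho A x) = rhoY A (psi x)) ->
             psi v = y -> forall x, psi x = phi x)].

(* X (x) V_n^{(x) l}: since V_n^{(x) l} has basis u_{s_1} (x) ... (x) u_{s_l}
   indexed by s : 'I_l -> 'I_n, the tensor product is the space of functions
   s |-> (coefficient in X);  F = sum_s F(s) (x) u_{s_1} (x) ... (x) u_{s_l}.
   Tensor factor 0 is X, factor p (1 <= p <= l) is the p-th copy of V_n,
   i.e. index p.-1 of s. *)
Definition tens (n l : nat) (X : lmodType C) := {ffun {ffun 'I_l -> 'I_n} -> X}.

Definition upd (n l : nat) (s : {ffun 'I_l -> 'I_n}) (k : 'I_l) (j : 'I_n)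
  : {ffun 'I_l -> 'I_n} := [ffun t => if t == k then j else s t].

(* Action of A in the p-th tensor factor; V_n action: A u_j = sum_i A_ij u_i. *)
Definition act_fac (n l : nat) (X : lmodType C) (rho : 'M[C]_n -> X -> X)
    (p : nat) (A : 'M[C]_n) (F : tens n l X) : tens n l X :=
  match p with
  | 0 => [ffun s : {ffun 'I_l -> 'I_n} => rho A (F s)]
  | p'.+1 =>
    match (insub p' : option 'I_l) with
    | Some k => [ffun s : {ffun 'I_l -> 'I_n} => \sum_(j : 'I_n) A (s k) j *: F (upd s k j)]
    | None => 0
    end
  end.

Definition act_tot (n l : nat) (X : lmodType C) (rho : 'M[C]_n -> X -> X)
    (A : 'M[C]_n) (F : tens n l X) : tens n l X :=
  \sum_(p < l.+1) act_fac rho p A F.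

Definition in_nminus_image (n l : nat) (X : lmodType C) (rho : 'M[C]_n -> X -> X)
    (F : tens n l X) : Prop :=
  exists W : 'I_n -> 'I_n -> tens n l X,
    F = \sum_(a : 'I_n) \sum_(b : 'I_n | (b < a)%N) act_tot rho (E a b) (W a b).

(* Dual bases of sl_n with respect to (x|y) = tr(xy):
   x = E_ab (a <> b) with dual E_ba, and
   x = H_k = E_kk - E_{n,n} (k < n, 1-indexed) with dual E_kk - (1/n) Id. *)
Definition Elast (n : nat) : 'M[C]_n :=
  \matrix_(i, j) ((i == j :> nat) && (i == n.-1 :> nat))%:R.

Definition Omega (n l : nat) (X : lmodType C) (rho : 'M[C]_n -> X -> X)
    (p q : nat) (F : tens n l X) : tens n l X :=
  \sum_(a : 'I_n) \sum_(b : 'I_n | a != b)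
      act_fac rho p (E a b) (act_fac rho q (E b a) F)
  + \sum_(k : 'I_n | (k < n.-1)%N)
      act_fac rho p (E k k - Elast n)
        (act_fac rho q (E k k - (n%:R)^-1 *: 1%:M) F).

Definition yop (n l : nat) (X : lmodType C) (rho : 'M[C]_n -> X -> X)
    (i : nat) (F : tens n l X) : tens n l X :=
  Omega rho 0 i F
  + \sum_(1 <= j < i) (Omega rho j i F + (n%:R)^-1 *: F)
  + ((n%:R - 1) / 2) *: F.

(* s = (1,..,1,2,..,2,...,n,..,n) with l_m copies of m. *)
Definition std_seq (n l : nat) (ls : 'I_n -> nat) (s : {ffun 'I_l -> 'I_n}) : bool :=
  [forall k : 'I_l, (\sum_(j < n | (j < s k)%N) ls j <= k)%N
                    && (k < \sum_(j < n | (j <= s k)%N) ls j)%N].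

Definition wvec (n l : nat) (X : lmodType C) (ls : 'I_n -> nat) (v : X) : tens n l X :=
  [ffun s : {ffun 'I_l -> 'I_n} => if std_seq ls s then v else 0].

(* rho = sum_i (n-2i+1)/2 eps_i, i 1-indexed; the coordinate of index m : 'I_n
   corresponds to i = m+1. *)
Definition rhoW (n : nat) (m : 'I_n) : C :=
  (n%:R - 2 * (m.+1)%:R + 1) / 2.

From HB Require Import structures.
From mathcomp Require Import all_boot all_order all_algebra.
From mathcomp Require Import complex Rstruct.
From mathcomp Require Import perm zify ring.
Import Order.TTheory GRing.Theory Num.Theory.
Local Open Scope ring_scope.
Set Implicit Arguments. Unset Strict Implicit. Unset Printing Implicit Defensive.

(* Let w = v_mu (x) u_s with s = (1,..,1,..,n,..,n) the standard sequence and m = s_i.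
   For j < i the operator Omega_ji + 1/n is the flip of the factors j and i, and
   Omega_0i w = mu_m w + sum_(b < m) E_mb v_mu (x) u_s[i:=b], the E_mb with b > m
   killing v_mu.  Modulo n_-(M(mu) (x) V^(x)l), each E_mb v_mu (x) u_s[i:=b] equals
   minus the action of E_mb on the V-factors alone, i.e. -w minus the flips of w at
   the positions j with s_j = b.  As s is nondecreasing, the positions with s_j < m
   are exactly the j < i with s_j <> m, so these flips cancel those coming from the
   Omega_ji; what is left is -m w and the flips at the positions j < i with s_j = m,
   which fix w.  Hence y_i w = (mu_m + (n-1)/2 - m + #{j < i | s_j = m}) w = zeta_i w
   modulo n_-. *)

Lemma big_delta (I : finType) (V : nmodType) (P : pred I) (i0 : I) (F : I -> V) :
  \sum_(i | P i) (if i == i0 then F i else 0) = if P i0 then F i0 else 0.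
Proof.
rewrite -big_mkcondr; have [Pi0|nPi0] := boolP (P i0).
  by apply: big_pred1 => i /=; case: eqP => [->|]; rewrite ?Pi0 ?andbF.
by apply: big_pred0 => i; case: eqP => [->|]; rewrite ?(negbTE nPi0) ?andbF.
Qed.

Lemma sum_indicator_mul (I : finType) (R : pzSemiRingType) (i0 : I) (F : I -> R) :
  \sum_i (i0 == i)%:R * F i = F i0.
Proof.
under eq_bigr do rewrite mulr_natl mulrb eq_sym.
by rewrite big_delta.
Qed.

Lemma sum_indicator (I : finType) (R : pzSemiRingType) (i0 : I) :
  \sum_i ((i0 == i)%:R : R) = 1.
Proof. by under eq_bigr do rewrite -[_%:R]mulr1; rewrite sum_indicator_mul. Qed.

Section SequenceUpdates.
Variables n l : nat.
Implicit Types (s t : {ffun 'I_l -> 'I_n}) (k p q : 'I_l).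

Lemma upd_at t k j : upd t k j k = j.
Proof. by rewrite ffunE eqxx. Qed.

Lemma upd_other t k j p : p != k -> upd t k j p = t p.
Proof. by move=> pk; rewrite ffunE (negbTE pk). Qed.

Lemma upd_id t k : upd t k (t k) = t.
Proof. by apply/ffunP => p; rewrite ffunE; case: eqP => // ->. Qed.

Lemma upd_upd t k a b : upd (upd t k a) k b = upd t k b.
Proof. by apply/ffunP => p; rewrite !ffunE; case: eqP. Qed.

Lemma upd_eqE s t k j :
  (upd s k j == t) = (j == t k) && [forall p, (p != k) ==> (s p == t p)].
Proof.
apply/eqP/andP => [<-|[/eqP -> /forallP agree]].
  split; first by rewrite upd_at.
  by apply/forallP => p; apply/implyP => pk; rewrite upd_other.
apply/ffunP => p; rewrite ffunE; case: eqP => [->|/eqP pk] //.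
exact/eqP/(implyP (agree p)).
Qed.

Definition tswap t p q : {ffun 'I_l -> 'I_n} := [ffun r => t (tperm p q r)].

Lemma upd_upd_tswap t p q : upd (upd t q (t p)) p (t q) = tswap t p q.
Proof.
apply/ffunP => r; rewrite !ffunE.
case: tpermP => [->|->|rp rq]; rewrite ?eqxx //.
- by case: eqP => // ->.
- by move/eqP/negbTE: rp => ->; move/eqP/negbTE: rq => ->.
Qed.

Lemma tswap_id t p q : t p = t q -> tswap t p q = t.
Proof. by move=> tpq; apply/ffunP => r; rewrite ffunE; case: tpermP => [->|->|]. Qed.

End SequenceUpdates.

Section StandardSequences.
Variables (n l : nat) (ls : 'I_n -> nat).
Implicit Types (s t : {ffun 'I_l -> 'I_n}) (k p q : 'I_l) (c d : 'I_n).

Definition block_start c := (\sum_(j < n | (j < c)%N) ls j)%N.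
Definition block_end c := (\sum_(j < n | (j <= c)%N) ls j)%N.
Definition in_block c (i : nat) := (block_start c <= i < block_end c)%N.

Lemma block_end_le_start c d : (c < d)%N -> (block_end c <= block_start d)%N.
Proof.
move=> cd; apply: (sub_le_big (op := addn)) => [x|x y|j jc].
- exact: leqnn.
- exact: leq_addr.
- exact: leq_ltn_trans jc cd.
Qed.

Lemma in_block_inj c d (i : nat) : in_block c i -> in_block d i -> c = d.
Proof.
move=> /andP[sc ec] /andP[sd ed]; case: (ltngtP c d) => [cd|dc|/val_inj //].
- by have := block_end_le_start cd; lia.
- by have := block_end_le_start dc; lia.
Qed.

Lemma std_seq_in_block s k : std_seq ls s -> in_block (s k) k.
Proof. by move/forallP/(_ k). Qed.

Lemma std_seq_eq s k c : std_seq ls s -> in_block c k -> s k = c.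
Proof. by move=> std; apply: in_block_inj (std_seq_in_block k std). Qed.

Lemma std_seq_uniq s t : std_seq ls s -> std_seq ls t -> s = t.
Proof.
by move=> std_s std_t; apply/ffunP => k; apply: std_seq_eq std_s (std_seq_in_block k std_t).
Qed.

Lemma std_seq_lt s p q : std_seq ls s -> (s p < s q)%N -> (p < q)%N.
Proof.
move=> std spq; have /andP[_ ep] := std_seq_in_block p std.
by have /andP[sq _] := std_seq_in_block q std; have := block_end_le_start spq; lia.
Qed.

Lemma std_seq_le s p q : std_seq ls s -> (p <= q)%N -> (s p <= s q)%N.
Proof. by move=> std pq; rewrite leqNgt; apply/negP => /(std_seq_lt std); lia. Qed.

Lemma std_seq_below s k p :
  std_seq ls s -> (p != k) && (s p < s k)%N = (p < k)%N && (s p != s k).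
Proof.
move=> std; apply/andP/andP => [[_ lt]|[pk ne]].
  by split; [apply: std_seq_lt lt | apply: contraTneq lt => ->; rewrite ltnn].
split; first by apply: contraTneq pk => ->; rewrite ltnn.
by rewrite ltn_neqAle (std_seq_le std (ltnW pk)) andbT.
Qed.

Lemma std_seq_count s k : std_seq ls s ->
  (\sum_(q < l | (q < k)%N && (s q == s k)) 1 = k - block_start (s k))%N.
Proof.
move=> std; have /andP[sk ek] := std_seq_in_block k std.
rewrite (eq_bigl (fun q : 'I_l => true && (block_start (s k) <= q)%N && (q < k)%N)) => [|q].
  rewrite -(big_ord_widen_cond l (fun i : nat => true && (block_start (s k) <= i)%N) (fun=> 1%N))
    ?(ltnW (ltn_ord k)) //.
  by rewrite -[RHS]muln1 -sum_nat_const_nat big_geq_mkord.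
case: (ltnP q k) => qk; rewrite ?andbF //= andbT; apply/eqP/idP => [<-|sq].
  by have /andP[] := std_seq_in_block q std.
by apply: std_seq_eq std _; rewrite /in_block sq (ltn_trans qk ek).
Qed.

Lemma sum_lowered_flips (V : nmodType) s k (F : 'I_l -> V) : std_seq ls s ->
  \sum_(b < n | (b < s k)%N) \sum_(p | p != k) (if s p == b then F p else 0)
  = \sum_(p < l | (p < k)%N && (s p != s k)) F p.
Proof.
move=> std; rewrite exchange_big /= -(eq_bigl _ _ (fun p => std_seq_below k p std)) big_mkcondr.
apply: eq_bigr => p _.
by rewrite (eq_bigr (fun b => if b == s p then F p else 0)) ?big_delta // => b _; rewrite eq_sym.
Qed.

End StandardSequences.

Section TensorAction.
Variables (n l : nat) (X : lmodType C) (rho : 'M[C]_n -> X -> X).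
Hypothesis rho_linear : forall A (a : C) (x y : X), rho A (a *: x + y) = a *: rho A x + rho A y.
Implicit Types (s t : {ffun 'I_l -> 'I_n}) (k p q : 'I_l) (a b c : 'I_n) (x : X) (F G : tens n l X).

Definition pure_tensor t x : tens n l X := [ffun s => if s == t then x else 0].

Lemma pure_tensor0 t : pure_tensor t 0 = 0.
Proof. by apply/ffunP => s; rewrite !ffunE; case: eqP. Qed.

Lemma pure_tensorZ t (c : C) x : pure_tensor t (c *: x) = c *: pure_tensor t x.
Proof. by apply/ffunP => s; rewrite !ffunE; case: eqP; rewrite ?scaler0. Qed.

Lemma rho0 A : rho A 0 = 0.
Proof.
have := rho_linear A 1 0 0; rewrite scale1r addr0 scale1r => double.
by apply: (addrI (rho A 0)); rewrite addr0 -double.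
Qed.

Lemma act_fac_linear (p : nat) A (c : C) F G :
  act_fac rho p A (c *: F + G) = c *: act_fac rho p A F + act_fac rho p A G.
Proof.
case: p => [|p] /=; first by apply/ffunP => s; rewrite !ffunE rho_linear.
case: insub => [k|]; last by rewrite scaler0 addr0.
apply/ffunP => s; rewrite !ffunE scaler_sumr -big_split; apply: eq_bigr => j _.
by rewrite !ffunE scalerDr !scalerA mulrC.
Qed.

Lemma act_fac0 (p : nat) A : act_fac rho p A (0 : tens n l X) = 0.
Proof.
have := act_fac_linear p A 1 0 0; rewrite scale1r addr0 scale1r => double.
by apply: (addrI (act_fac rho p A 0)); rewrite addr0 -double.
Qed.

Lemma act_facZ (p : nat) A (c : C) F : act_fac rho p A (c *: F) = c *: act_fac rho p A F.
Proof. by rewrite -[c *: F]addr0 act_fac_linear act_fac0 addr0. Qed.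

Lemma act_fac0_pure A t x : act_fac rho 0 A (pure_tensor t x) = pure_tensor t (rho A x).
Proof. by apply/ffunP => s; rewrite !ffunE; case: eqP; rewrite ?rho0. Qed.

Lemma act_facS_pure k A t x :
  act_fac rho k.+1 A (pure_tensor t x) = \sum_j A j (t k) *: pure_tensor (upd t k j) x.
Proof.
apply/ffunP => s; rewrite /act_fac valK !ffunE sum_ffunE.
have agreeC : [forall p, (p != k) ==> (t p == s p)] = [forall p, (p != k) ==> (s p == t p)].
  by apply: eq_forallb => p; rewrite [t p == _]eq_sym.
under eq_bigr do rewrite ffunE upd_eqE.
under [RHS]eq_bigr do rewrite !ffunE eq_sym upd_eqE agreeC.
case: [forall p, _]; last by rewrite !big1 // => j _; rewrite andbF scaler0.
under eq_bigr do rewrite andbT (fun_if ( *:%R _)) scaler0.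
under [RHS]eq_bigr do rewrite andbT (fun_if ( *:%R _)) scaler0.
by rewrite !big_delta.
Qed.

Lemma act_facS_pure_E k a b t x :
  act_fac rho k.+1 (E a b) (pure_tensor t x)
  = if t k == b then pure_tensor (upd t k a) x else 0.
Proof.
rewrite act_facS_pure (bigD1 a) //= big1 => [|j /negbTE ja]; last by rewrite mxE ja scale0r.
by rewrite mxE eqxx addr0; case: eqP; rewrite ?scale1r ?scale0r.
Qed.

Lemma act_facS_pure_diag k (d : 'rV[C]_n) t x :
  act_fac rho k.+1 (diag_mx d) (pure_tensor t x) = d 0 (t k) *: pure_tensor t x.
Proof.
rewrite act_facS_pure (bigD1 (t k)) //= big1 => [|j /negbTE jt]; last first.
  by rewrite mxE jt mulr0n scale0r.
by rewrite mxE eqxx mulr1n upd_id addr0.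
Qed.

Lemma act_tot_E_pure a b t x :
  act_tot rho (E a b) (pure_tensor t x)
  = pure_tensor t (rho (E a b) x)
    + \sum_p (if t p == b then pure_tensor (upd t p a) x else 0).
Proof.
rewrite /act_tot big_ord_recl act_fac0_pure; congr (_ + _).
by apply: eq_bigr => p _; rewrite lift0 act_facS_pure_E.
Qed.

Definition Omega_root (p q : nat) F : tens n l X :=
  \sum_a \sum_(b | a != b) act_fac rho p (E a b) (act_fac rho q (E b a) F).

Definition Omega_Cartan (p q : nat) F : tens n l X :=
  \sum_(c : 'I_n | (c < n.-1)%N)
    act_fac rho p (E c c - Elast n) (act_fac rho q (E c c - (n%:R)^-1 *: 1%:M) F).

Lemma OmegaE (p q : nat) F : Omega rho p q F = Omega_root p q F + Omega_Cartan p q F.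
Proof. by []. Qed.

Lemma Omega_root_pure (p : nat) k t x :
  Omega_root p k.+1 (pure_tensor t x)
  = \sum_(b | t k != b) act_fac rho p (E (t k) b) (pure_tensor (upd t k b) x).
Proof.
rewrite /Omega_root (eq_bigr (fun a => if a == t k then
  \sum_(b | t k != b) act_fac rho p (E (t k) b) (pure_tensor (upd t k b) x) else 0)).
  by rewrite big_delta.
move=> a _; case: eqP => [->|/eqP ta].
  by apply: eq_bigr => b _; rewrite act_facS_pure_E eqxx.
by apply: big1 => b _; rewrite act_facS_pure_E eq_sym (negbTE ta) act_fac0.
Qed.

Lemma Omega0 (p q : nat) : Omega rho p q (0 : tens n l X) = 0.
Proof.
rewrite OmegaE /Omega_root /Omega_Cartan !big1 ?addr0 // => [c _|a _].
  by rewrite !act_fac0.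
by apply: big1 => b _; rewrite !act_fac0.
Qed.

Lemma yop0 i : yop rho i (0 : tens n l X) = 0.
Proof.
rewrite /yop Omega0 big1 => [|j _]; last by rewrite Omega0 scaler0 addr0.
by rewrite scaler0 !addr0.
Qed.

Lemma act_tot0 A : act_tot rho A (0 : tens n l X) = 0.
Proof. by apply: big1 => p _; rewrite act_fac0. Qed.

Variable lo : 'I_n.
Hypothesis lo_last : lo = n.-1 :> nat.

Lemma Cartan_diag c :
  E c c - Elast n = diag_mx (\row_i ((i == c)%:R - (i == lo)%:R)).
Proof.
apply/matrixP => i j; rewrite !mxE -lo_last.
case: (eqVneq i j) => [<-|ij]; first by rewrite !andbb eqxx mulr1n.
rewrite mulr0n (inj_eq val_inj) (negbTE ij) andFb subr0.
by case: (i =P c) => [<-|_]; rewrite // [j == _]eq_sym (negbTE ij) andbF.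
Qed.

Lemma dual_Cartan_diag c :
  E c c - (n%:R)^-1 *: 1%:M = diag_mx (\row_i ((i == c)%:R - (n%:R)^-1)).
Proof.
apply/matrixP => i j; rewrite !mxE.
case: (eqVneq i j) => [<-|ij]; first by rewrite andbb mulr1n mulr1.
rewrite mulr0n mulr0 subr0.
by case: (i =P c) => [<-|_]; rewrite // [j == _]eq_sym (negbTE ij) andbF.
Qed.

Lemma Cartan_pairing (m : 'I_n) (alpha : 'I_n -> C) :
  \sum_(c < n | (c < n.-1)%N) ((m == c)%:R - (n%:R)^-1) * (alpha c - alpha lo)
  = alpha m - (n%:R)^-1 * \sum_c alpha c.
Proof.
have n_neq0 : (n%:R : C) != 0 by rewrite pnatr_eq0 -lt0n (leq_ltn_trans _ (ltn_ord lo)).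
rewrite big_rmcond => [|c c_last]; last first.
  suff -> : c = lo by rewrite subrr mulr0.
  by apply: val_inj; rewrite /= lo_last; have := ltn_ord c; lia.
under eq_bigr do rewrite mulrBl.
rewrite sumrB sum_indicator_mul -mulr_sumr sumrB sumr_const card_ord -mulr_natr.
by field.
Qed.

Lemma Omega_Cartan_pure (p : nat) k t x (alpha : 'I_n -> C) :
  (forall c, act_fac rho p (E c c - Elast n) (pure_tensor t x)
             = (alpha c - alpha lo) *: pure_tensor t x) ->
  Omega_Cartan p k.+1 (pure_tensor t x)
  = (alpha (t k) - (n%:R)^-1 * \sum_c alpha c) *: pure_tensor t x.
Proof.
move=> weight; rewrite -Cartan_pairing scaler_suml.
apply: eq_bigr => c _.
by rewrite dual_Cartan_diag act_facS_pure_diag act_facZ weight scalerA mxE.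
Qed.

(* The split Casimir of gl_n acts on V_n (x) V_n as the flip; Omega omits its
   trace part (1/n) Id (x) Id. *)
Lemma Omega_flip q k t x : q != k ->
  Omega rho q.+1 k.+1 (pure_tensor t x) + (n%:R)^-1 *: pure_tensor t x
  = pure_tensor (tswap t q k) x.
Proof.
move=> qk.
have root : \sum_(b | t k != b) act_fac rho q.+1 (E (t k) b) (pure_tensor (upd t k b) x)
            = if t k != t q then pure_tensor (tswap t q k) x else 0.
  rewrite -(big_delta (fun b => t k != b) _ (fun=> pure_tensor (tswap t q k) x)).
  apply: eq_bigr => b _.
  rewrite act_facS_pure_E upd_other // [t q == b]eq_sym.
  by case: eqP => // ->; rewrite upd_upd_tswap.
have weight c : act_fac rho q.+1 (E c c - Elast n) (pure_tensor t x)
                = ((t q == c)%:R - (t q == lo)%:R) *: pure_tensor t x.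
  by rewrite Cartan_diag act_facS_pure_diag mxE.
rewrite OmegaE Omega_root_pure root (Omega_Cartan_pure k weight).
rewrite sum_indicator mulr1 -addrA -scalerDl subrK.
have [tqk|tqk] := eqVneq (t q) (t k).
  by rewrite add0r scale1r tswap_id.
by rewrite scale0r addr0.
Qed.

Variables (mu : 'I_n -> C) (v : X).
Hypothesis hw_raising : forall a b, (a < b)%N -> rho (E a b) v = 0.
Hypothesis hw_diag : forall d : 'rV[C]_n, \sum_i d 0 i = 0 ->
  rho (diag_mx d) v = (\sum_i mu i * d 0 i) *: v.
Hypothesis mu_traceless : \sum_i mu i = 0.

Lemma rho_Cartan_hw c : rho (E c c - Elast n) v = (mu c - mu lo) *: v.
Proof.
rewrite Cartan_diag hw_diag; last first.
  by under eq_bigr do rewrite mxE [_ == c]eq_sym [_ == lo]eq_sym; rewrite sumrB !sum_indicator subrr.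
congr (_ *: _); under eq_bigr do rewrite mxE mulrC mulrBl [_ == c]eq_sym [_ == lo]eq_sym.
by rewrite sumrB !sum_indicator_mul.
Qed.

Lemma Omega_hw_pure k t :
  Omega rho 0 k.+1 (pure_tensor t v)
  = \sum_(b < n | (b < t k)%N) pure_tensor (upd t k b) (rho (E (t k) b) v)
    + mu (t k) *: pure_tensor t v.
Proof.
have weight c : act_fac rho 0 (E c c - Elast n) (pure_tensor t v)
                = (mu c - mu lo) *: pure_tensor t v.
  by rewrite act_fac0_pure rho_Cartan_hw pure_tensorZ.
rewrite OmegaE Omega_root_pure (Omega_Cartan_pure k weight) mu_traceless mulr0 subr0.
congr (_ + _); rewrite big_mkcond [RHS]big_mkcond; apply: eq_bigr => b _.
rewrite act_fac0_pure; case: (ltngtP b (t k)) => [lt|gt|eq].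
- by rewrite neq_ltn lt orbT.
- by rewrite neq_ltn gt hw_raising // pure_tensor0.
- by rewrite (val_inj eq) eqxx.
Qed.

Lemma yop_hw_pure k t :
  yop rho k.+1 (pure_tensor t v)
  = \sum_(b < n | (b < t k)%N) pure_tensor (upd t k b) (rho (E (t k) b) v)
    + \sum_(q < l | (q < k)%N) pure_tensor (tswap t q k) v
    + (mu (t k) + (n%:R - 1) / 2) *: pure_tensor t v.
Proof.
rewrite /yop Omega_hw_pure big_add1 /= big_mkord.
rewrite (big_ord_widen l (fun j => Omega rho j.+1 k.+1 (pure_tensor t v)
                                   + (n%:R)^-1 *: pure_tensor t v) (ltnW (ltn_ord k))).
rewrite (eq_bigr (fun q => pure_tensor (tswap t q k) v)) => [|q qk]; last first.
  by apply: Omega_flip; apply: contraTneq qk => ->; rewrite ltnn.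
by rewrite scalerDl addrA; congr (_ + _); apply: addrAC.
Qed.

Lemma act_tot_lowering k b t x :
  act_tot rho (E (t k) b) (pure_tensor (upd t k b) x)
  = pure_tensor (upd t k b) (rho (E (t k) b) x) + pure_tensor t x
    + \sum_(p | p != k) (if t p == b then pure_tensor (tswap t p k) x else 0).
Proof.
rewrite act_tot_E_pure -addrA (bigD1 k) //= upd_at eqxx upd_upd upd_id.
congr (_ + (_ + _)); apply: eq_bigr => p pk.
by rewrite upd_other //; case: eqP => // <-; rewrite upd_upd_tswap.
Qed.

Variable ls : 'I_n -> nat.

Lemma yop_std_hw s k : std_seq ls s ->
  yop rho k.+1 (pure_tensor s v)
  = \sum_(b < n | (b < s k)%N) act_tot rho (E (s k) b) (pure_tensor (upd s k b) v)
    + (mu (s k) + rhoW (s k) + (k.+1%:R - (block_start ls (s k))%:R - 1))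
      *: pure_tensor s v.
Proof.
move=> std; set L := block_start ls (s k).
have flips : \sum_(q < l | (q < k)%N) pure_tensor (tswap s q k) v
    = (k - L)%:R *: pure_tensor s v
      + \sum_(q < l | (q < k)%N && (s q != s k)) pure_tensor (tswap s q k) v.
  rewrite (bigID (fun q => s q == s k)) /= -(std_seq_count k std) natr_sum scaler_suml.
  by congr (_ + _); apply: eq_bigr => q /andP[_ /eqP sq]; rewrite scale1r tswap_id.
have zeta : (k - L)%:R + (mu (s k) + (n%:R - 1) / 2)
    = (s k)%:R + (mu (s k) + rhoW (s k) + (k.+1%:R - L%:R - 1)) :> C.
  have /andP[Lk _] := std_seq_in_block k std.
  by rewrite /rhoW natrB //; field.
rewrite yop_hw_pure flips.
under [in RHS]eq_bigr do rewrite act_tot_lowering.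
have lowered : \sum_(b < n | (b < s k)%N) pure_tensor s v = (s k)%:R *: pure_tensor s v.
  by rewrite (big_ord_narrow (ltnW (ltn_ord (s k)))) sumr_const card_ord scaler_nat.
rewrite !big_split /= (sum_lowered_flips _ _ std) lowered.
rewrite [(k - L)%:R *: _ + _]addrC addrA -[LHS]addrA -scalerDl zeta scalerDl addrA.
by congr (_ + _); apply: addrAC.
Qed.
End TensorAction.

Lemma wvec_std n l (X : lmodType C) (ls : 'I_n -> nat) (v : X) (s : {ffun 'I_l -> 'I_n}) :
  std_seq ls s -> wvec l ls v = pure_tensor s v.
Proof.
move=> std; apply/ffunP => t; rewrite !ffunE; have [std_t|] := boolP (std_seq ls t).
  by rewrite (std_seq_uniq std_t std) eqxx.
by case: eqP => // ->; rewrite std.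
Qed.

Lemma wvec_eq0 n l (X : lmodType C) (ls : 'I_n -> nat) (v : X) :
  ~~ [exists s : {ffun 'I_l -> 'I_n}, std_seq ls s] -> wvec l ls v = 0.
Proof. by move/existsPn => no_std; apply/ffunP => s; rewrite !ffunE (negbTE (no_std s)). Qed.

Theorem mainTheorem4 (n l : nat) (ls : 'I_n -> nat) (lam mu : 'I_n -> C)
    (X : lmodType C) (rho : 'M[C]_n -> X -> X) (v : X) :
  (2 <= n)%N -> (1 <= l)%N ->
  integral_weight lam -> integral_weight mu ->
  (\sum_(m < n) ls m)%N = l ->
  (exists c : C, forall m : 'I_n, lam m - mu m = (ls m)%:R + c) ->
  is_verma rho mu v ->
  forall (i : nat) (m : 'I_n),
    (1 <= i <= l)%N ->
    (\sum_(k < n | (k < m)%N) ls k < i <= \sum_(k < n | (k <= m)%N) ls k)%N ->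
    in_nminus_image rho
      (yop rho i (wvec l ls v)
       - (mu m + rhoW m + (i%:R - (\sum_(k < n | (k < m)%N) ls k)%:R - 1))
           *: wvec l ls v).
Proof.
move=> n_ge2 _ _ [mu_traceless _] _ _ [[rho_linear _ _] [[hw_raising hw_diag] _]] i m.
move=> /andP[i_ge1 i_le] /andP[start_lt end_ge].
have [/existsP[s std]|no_std] := boolP [exists s : {ffun 'I_l -> 'I_n}, std_seq ls s]; last first.
  exists (fun _ _ => 0); rewrite wvec_eq0 // yop0 // scaler0 subr0.
  by rewrite big1 // => a _; rewrite big1 // => b _; rewrite act_tot0.
case: i i_ge1 i_le start_lt end_ge => [//|k] _ k_lt start_le end_gt.
have last_lt : (n.-1 < n)%N by lia.
pose p := Ordinal k_lt.
have s_p : s p = m by apply: (std_seq_eq std); apply/andP; split; [exact: start_le | exact: end_gt].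
rewrite (wvec_std _ std) -s_p.
rewrite (yop_std_hw rho_linear (lo := Ordinal last_lt) erefl hw_raising hw_diag mu_traceless p std).
rewrite addrK.
exists (fun a b => if a == s p then pure_tensor (upd s p b) v else 0).
rewrite [RHS](bigD1 (s p)) //= eqxx [X in _ + X]big1 ?addr0 // => a /negbTE ->.
by apply: big1 => b _; rewrite act_tot0.
Qed.
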